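(* Let $R$ be a commutative Noetherian ring, $M$ a finitely generated $R$-module, and $X \subseteq \mathrm{Spec}(R)$ a basic set. For any subset $S \subseteq M$ and any integer $t \in \mathbb{N}$, the set $Y_t := \{\mathfrak{p} \in X \mid \delta_\mathfrak{p}(S,M) \leq t\}$ is closed in $X$ (with the subspace topology from the Zariski topology on $\mathrm{Spec}(R)$).
   Context: A subset $X \subseteq \mathrm{Spec}(R)$ is basic if, whenever the intersection of a family of primes in $X$ is a prime ideal, that intersection belongs to $X$. For $S \subseteq M$ let $\langle S \rangle$ be the $R$-submodule generated by $S$. For a prime $\mathfrak{p}$, $\delta_\mathfrak{p}(S,M)$ is the largest integer $n \ge 0$ such that there is a free $R_\mathfrak{p}$-submodule $G \subseteq \langle S\rangle_\mathfrak{p}$ of rank $n$ which is a direct summand of $M_\mathfrak{p}$ (i.e. there is a map $M_\mathfrak{p} \to G$ whose composition with $G \subseteq M_\mathfrak{p}$ is the identity of $G$). Equivalently, it is the largest $n$ such that some free direct summand $F$ of $M_\mathfrak{p}$ has the property that the image of $S$ under $M_\mathfrak{p} \to F \to F/\mathfrak{p}F$ spans a vector space of dimension $n$ over $R_\mathfrak{p}/\mathfrak{p}R_\mathfrak{p}$. *)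

From HB Require Import structures.
From mathcomp Require Import all_boot all_algebra.
Set Implicit Arguments. Unset Strict Implicit. Unset Printing Implicit Defensive.
Import GRing.Theory.
Local Open Scope ring_scope.

Section Defs.
Variable R : comNzRingType.

Definition is_ideal (I : R -> Prop) : Prop :=
  I 0 /\ (forall x y, I x -> I y -> I (x + y)) /\ (forall r x, I x -> I (r * x)).

Definition is_prime_ideal (I : R -> Prop) : Prop :=
  is_ideal I /\ ~ I 1 /\ (forall x y, I (x * y) -> I x \/ I y).

Definition noetherian : Prop :=
  forall I : R -> Prop, is_ideal I ->
    exists s : seq R, forall x, I x <->
      exists c : 'I_(size s) -> R, x = \sum_(i < size s) c i * s`_i.

Definition spec := {p : R -> Prop | is_prime_ideal p}.

Definition basic (X : spec -> Prop) : Prop :=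
  forall F : spec -> Prop, (forall p, F p -> X p) ->
    forall q : spec, (forall x, sval q x <-> (forall p, F p -> sval p x)) -> X q.

(* Y is closed in X for the subspace topology induced by the Zariski topology:
   Y = X \cap V(I) for some subset I of R. *)
Definition zariski_closed_in (X Y : spec -> Prop) : Prop :=
  exists I : R -> Prop, forall p, Y p <-> (X p /\ forall x, I x -> sval p x).

(* R_p, given by the defining (universal) properties of the localization
   of R at the prime p: f : R -> A is a ring map, inverts R \ p, every element
   is a fraction f r / f s with s \notin p, and the kernel consists of elements
   killed by some s \notin p. *)
Definition ring_localization (p : spec) (A : comUnitRingType) (f : R -> A) : Prop :=
  f 1 = 1 /\ (forall x y, f (x + y) = f x + f y) /\ (forall x y, f (x * y) = f x * f y)
  /\ (forall s, ~ sval p s -> f s \is a GRing.unit)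
  /\ (forall a, exists r s, ~ sval p s /\ f s * a = f r)
  /\ (forall r, f r = 0 -> exists s, ~ sval p s /\ s * r = 0).

Variable M : lmodType R.

Definition fin_gen : Prop :=
  exists s : seq M, forall m, exists c : 'I_(size s) -> R,
    m = \sum_(i < size s) c i *: s`_i.

Definition gen_submod (S : M -> Prop) (m : M) : Prop :=
  exists n (c : 'I_n -> R) (x : 'I_n -> M),
    (forall i, S (x i)) /\ m = \sum_(i < n) c i *: x i.

(* M_p (over A = R_p via f), given by the defining properties of the
   localization of M at p: g is R-linear (over f), every element is g m / f s
   with s \notin p, and g m = 0 iff s m = 0 for some s \notin p. *)
Definition module_localization (p : spec) (A : comUnitRingType) (f : R -> A)
    (N : lmodType A) (g : M -> N) : Prop :=
  (forall x y, g (x + y) = g x + g y) /\ (forall r x, g (r *: x) = f r *: g x)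
  /\ (forall y, exists m s, ~ sval p s /\ f s *: y = g m)
  /\ (forall m, g m = 0 -> exists s, ~ sval p s /\ s *: m = 0).

Definition loc_submod (p : spec) (A : comUnitRingType) (f : R -> A)
    (N : lmodType A) (g : M -> N) (S : M -> Prop) (y : N) : Prop :=
  exists m s, gen_submod S m /\ ~ sval p s /\ f s *: y = g m.

End Defs.

Definition span_fam (A : pzRingType) (N : lmodType A) n (b : 'I_n -> N) (y : N) : Prop :=
  exists c : 'I_n -> A, y = \sum_(i < n) c i *: b i.

(* There is a free A-submodule G of N of rank n (G = span of the basis b),
   contained in T, which is a direct summand of N: there is an A-linear
   r : N -> G whose composition with the inclusion G \subseteq N is id_G. *)
Definition has_free_summand_in (A : pzRingType) (N : lmodType A) (T : N -> Prop)
    (n : nat) : Prop :=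
  exists b : 'I_n -> N,
    (forall i, T (b i))
    /\ (forall c : 'I_n -> A, \sum_(i < n) c i *: b i = 0 -> forall i, c i = 0)
    /\ exists r : N -> N,
         (forall a x y, r (a *: x + y) = a *: r x + r y)
         /\ (forall y, span_fam b (r y))
         /\ (forall y, span_fam b y -> r y = y).

Definition is_largest_free_summand (A : pzRingType) (N : lmodType A) (T : N -> Prop)
    (d : nat) : Prop :=
  has_free_summand_in T d /\ forall n, has_free_summand_in T n -> (n <= d)%N.

Definition is_delta (R : comNzRingType) (M : lmodType R) (p : spec R)
    (A : comUnitRingType) (f : R -> A) (N : lmodType A) (g : M -> N)
    (S : M -> Prop) (d : nat) : Prop :=
  is_largest_free_summand (loc_submod p f g S) d.

From HB Require Import structures.
From mathcomp Require Import all_boot all_algebra.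
From mathcomp Require Import ring.
From Stdlib Require Import Classical IndefiniteDescription.
Set Implicit Arguments. Unset Strict Implicit. Unset Printing Implicit Defensive.
Import GRing.Theory.
Local Open Scope ring_scope.

(* The set of primes q at which <S>_q contains a free rank-n direct summand
   of M_q is open in Spec R, so Y_t, the set of points of X lying in none of
   these sets for n > t, is closed in X.  For openness, write a basis of such
   a summand at p as g(m_j)/s_j with m_j in <S>, and lift its coordinate
   functionals, up to units, to R-linear maps Phi_i : M -> R; this uses that M
   is finitely presented, R being Noetherian.  In R_p the matrix (Phi_i(m_j))
   is diagonal with invertible entries.  That is finitely many conditions,
   each "an element lies outside q" or "an element vanishes in R_q", and they
   all hold on a neighbourhood D(u) of p, where the same m_j and Phi_i again
   exhibit a free summand of rank n. *)

Lemma bounded_ex_max (P : nat -> Prop) t :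
  (forall n, P n -> (n <= t)%N) -> P 0%N ->
  exists d, P d /\ forall n, P n -> (n <= d)%N.
Proof.
elim: t => [|t IHt] le_t P0; first by exists 0%N.
have [Pt1 | nPt1] := classic (P t.+1); first by exists t.+1.
apply: IHt => // n Pn; rewrite -ltnS ltn_neqAle le_t // andbT.
by apply/eqP => En; apply: nPt1; rewrite -En.
Qed.

Section FreeSummand.
Variables (A : pzRingType) (N : lmodType A).

Lemma dual_coord n (b : 'I_n -> N) (psi : 'I_n -> {scalar N}) (c : 'I_n -> A) i :
  (forall i j, psi i (b j) = (i == j)%:R) -> psi i (\sum_j c j *: b j) = c i.
Proof.
move=> dual; rewrite linear_sum (bigD1 i) //= big1 => [|j ji].
  by rewrite linearZ_LR dual eqxx mulr1 addr0.
by rewrite linearZ_LR dual eq_sym (negbTE ji) mulr0.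
Qed.

Lemma has_free_summand_inP (T : N -> Prop) n :
  has_free_summand_in T n <->
  exists2 b : 'I_n -> N, (forall i, T (b i)) &
    exists psi : 'I_n -> {scalar N}, forall i j, psi i (b j) = (i == j)%:R.
Proof.
split=> [[b [Tb [b_free [r [r_lin [r_span r_id]]]]]] | [b Tb [psi dual]]].
  have [coord r_coord] := functional_choice _ r_span.
  have coord_uniq c y : r y = \sum_i c i *: b i -> coord y =1 c.
    move=> ry i; apply/eqP; rewrite -subr_eq0; apply/eqP; move: i.
    apply: b_free; under eq_bigr do rewrite scalerBl.
    by rewrite sumrB -r_coord -ry subrr.
  have coord_lin i : scalar (coord^~ i).
    move=> a y z /=; apply: (coord_uniq (fun j => a * coord y j + coord z j)).
    rewrite r_lin !r_coord scaler_sumr -big_split /=.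
    by apply: eq_bigr => j _; rewrite scalerDl scalerA.
  exists b => //.
  exists (fun i =>
    HB.pack_for {scalar N} (coord^~ i) (GRing.isLinear.Build _ _ _ _ _ (coord_lin i))).
  move=> i j /=; have bE : b j = \sum_k (k == j)%:R *: b k.
    rewrite (bigD1 j) //= eqxx scale1r big1 ?addr0 // => k /negbTE ->.
    by rewrite scale0r.
  apply: (coord_uniq (fun k => (k == j)%:R)).
  by rewrite -bE r_id //; exists (fun k => (k == j)%:R).
exists b; split => //; split.
  by move=> c c0 i; rewrite -(dual_coord c i dual) c0 linear0.
exists (fun y => \sum_i psi i y *: b i); split.
  move=> a y z; rewrite scaler_sumr -big_split; apply: eq_bigr => i _ /=.
  by rewrite linearP scalerDl scalerA.
split=> [y | y [c ->]]; first by exists (fun i => psi i y).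
by apply: eq_bigr => i _; rewrite (dual_coord c i dual).
Qed.

Lemma has_free_summand_in0 (T : N -> Prop) : has_free_summand_in T 0.
Proof.
by apply/has_free_summand_inP; exists (fun=> 0) => [[]//|]; exists (fun=> \0) => -[].
Qed.

Lemma largest_free_summand_le (T : N -> Prop) t :
  (exists d, is_largest_free_summand T d /\ (d <= t)%N) <->
  (forall n, has_free_summand_in T n -> (n <= t)%N).
Proof.
split=> [[d [[_ d_max] le_dt]] n /d_max le_nd | le_t]; first exact: leq_trans le_dt.
have [d [free_d d_max]] := bounded_ex_max le_t (has_free_summand_in0 T).
by exists d; split; [split | apply: le_t].
Qed.

End FreeSummand.

Lemma scalar_of_generators (R : comNzRingType) (M : lmodType R) k
    (e : 'I_k -> M) (x : 'I_k -> R) :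
  (forall m, exists d : 'I_k -> R, m = \sum_l d l *: e l) ->
  (forall d : 'I_k -> R, \sum_l d l *: e l = 0 -> \sum_l d l * x l = 0) ->
  exists Phi : {scalar M}, forall d, Phi (\sum_l d l *: e l) = \sum_l d l * x l.
Proof.
move=> e_gen rel_x; have [coef coefE] := functional_choice _ e_gen.
have val_x d d' : \sum_l d l *: e l = \sum_l d' l *: e l ->
    \sum_l d l * x l = \sum_l d' l * x l.
  move=> /eqP; rewrite -subr_eq0 -sumrB => /eqP dd'.
  apply/eqP; rewrite -subr_eq0 -sumrB; apply/eqP.
  under eq_bigr do rewrite -mulrBl; apply: rel_x.
  by rewrite -[RHS]dd'; apply: eq_bigr => l _; rewrite scalerBl.
pose phi m := \sum_l coef m l * x l.
have phiE d : phi (\sum_l d l *: e l) = \sum_l d l * x l.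
  by apply: val_x; rewrite -coefE.
have phi_lin : scalar phi.
  move=> a m m'; rewrite [m in LHS]coefE [m' in LHS]coefE scaler_sumr -big_split /=.
  rewrite (eq_bigr (fun l => (a * coef m l + coef m' l) *: e l)).
    by rewrite phiE mulr_sumr -big_split; apply: eq_bigr => l _; rewrite mulrDl mulrA.
  by move=> l _; rewrite scalerDl scalerA.
by exists (HB.pack_for {scalar M} phi (GRing.isLinear.Build _ _ _ _ _ phi_lin)).
Qed.

Section PrimeIdeal.
Variables (R : comNzRingType) (p : spec R).
Implicit Types x y : R.

Lemma notin_prime1 : ~ sval p 1.
Proof. by case: (svalP p) => _ []. Qed.

Lemma notin_primeM x y : ~ sval p (x * y) <-> ~ sval p x /\ ~ sval p y.
Proof.
case: (svalP p) => [[_ [_ p_mul]] [_ p_prime]].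
split=> [xy | [nx ny] /p_prime []//].
by split=> [px | py]; apply: xy; [rewrite mulrC|]; apply: p_mul.
Qed.

Lemma notin_prime_prod (I : finType) (F : I -> R) :
  ~ sval p (\prod_i F i) <-> forall i, ~ sval p (F i).
Proof.
split=> [nF i | nF].
  by move: nF; rewrite (bigD1 i) //= => /notin_primeM [].
apply: (big_ind (fun x => ~ sval p x)) => // [|x y nx ny]; first exact: notin_prime1.
exact/notin_primeM.
Qed.

Definition vanishes_at x := exists v, ~ sval p v /\ v * x = 0.

Lemma vanishing_ideal_annihilator (J : R -> Prop) :
  noetherian R -> is_ideal J -> (forall z, J z -> vanishes_at z) ->
  exists2 u, ~ sval p u & forall z, J z -> u * z = 0.
Proof.
move=> R_noeth J_ideal J_van; have [s sJ] := R_noeth J J_ideal.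
have Js (l : 'I_(size s)) : vanishes_at s`_l.
  apply/J_van/sJ; exists (fun l' => (l' == l)%:R).
  rewrite (bigD1 l) //= eqxx mul1r big1 ?addr0 // => l' /negbTE ->.
  by rewrite mul0r.
have [v vE] := functional_choice _ Js.
exists (\prod_l v l); first by apply/notin_prime_prod => l; case: (vE l).
move=> z /sJ [c ->]; rewrite mulr_sumr big1 // => l _.
by rewrite (bigD1 l) //= [c l * _]mulrC mulrACA (proj2 (vE l)) mul0r.
Qed.

End PrimeIdeal.

Definition splits_at (R : comNzRingType) (M : lmodType R) (p : spec R) n
    (m : 'I_n -> M) (Phi : 'I_n -> {scalar M}) (kap : 'I_n -> R) : Prop :=
  (forall j, ~ sval p (kap j)) /\
  forall i j, vanishes_at p (Phi i (m j) - (i == j)%:R * kap j).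

Lemma splits_at_open (R : comNzRingType) (M : lmodType R) (p : spec R) n
    (m : 'I_n -> M) (Phi : 'I_n -> {scalar M}) (kap : 'I_n -> R) :
  splits_at p m Phi kap ->
  exists2 u, ~ sval p u & forall q, ~ sval q u -> splits_at q m Phi kap.
Proof.
move=> [nkap van].
have [v vE] := functional_choice _ (fun ij : 'I_n * 'I_n => van ij.1 ij.2).
exists ((\prod_j kap j) * \prod_ij v ij).
  apply/notin_primeM; split; apply/notin_prime_prod; first exact: nkap.
  by move=> ij; case: (vE ij).
move=> q /notin_primeM [/notin_prime_prod nkap_q /notin_prime_prod nv_q]; split=> // i j.
by exists (v (i, j)); split; [exact: nv_q | case: (vE (i, j))].
Qed.

Section Localization.
Variables (R : comNzRingType) (p : spec R) (A : comUnitRingType) (f : R -> A).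
Hypothesis f_loc : ring_localization p f.

Let f_nmod : nmod_morphism f.
Proof.
case: f_loc => _ [fD _]; split=> //.
by apply: (@addrI _ (f 0)); rewrite -fD !addr0.
Qed.

Let f_monoid : monoid_morphism f.
Proof. by case: f_loc => f1 [_ [fM _]]. Qed.

HB.instance Definition _ := GRing.isNmodMorphism.Build R A f f_nmod.
HB.instance Definition _ := GRing.isMonoidMorphism.Build R A f f_monoid.

Lemma loc_unit s : ~ sval p s -> f s \is a GRing.unit.
Proof. by case: f_loc => _ [_ [_ [f_unit _]]]; apply: f_unit. Qed.

Lemma vanishes_atP x : vanishes_at p x <-> f x = 0.
Proof.
split=> [[v [nv vx]] | fx0]; last by case: f_loc => _ [_ [_ [_ [_ f_ker]]]]; apply: f_ker.
by apply: (mulrI (loc_unit nv)); rewrite -rmorphM vx rmorph0 mulr0.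
Qed.

Lemma common_denominator (I : finType) (a : I -> A) :
  exists w (x : I -> R), ~ sval p w /\ forall i, f w * a i = f (x i).
Proof.
have frac i : exists rs : R * R, ~ sval p rs.2 /\ f rs.2 * a i = f rs.1.
  case: f_loc => _ [_ [_ [_ [f_frac _]]]].
  by have [r [s rs]] := f_frac (a i); exists (r, s).
have [rs rsE] := functional_choice _ frac.
exists (\prod_i (rs i).2), (fun i => (\prod_(j | j != i) (rs j).2) * (rs i).1); split.
  by apply/notin_prime_prod => i; case: (rsE i).
by move=> i; rewrite (bigD1 i) //= rmorphM mulrAC (proj2 (rsE i)) rmorphM mulrC.
Qed.

Variables (M : lmodType R) (N : lmodType A) (g : M -> N).
Hypothesis g_loc : module_localization p f g.

Let g_nmod : nmod_morphism g.
Proof.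
case: g_loc => gD _; split=> //.
by apply: (@addrI _ (g 0)); rewrite -gD !addr0.
Qed.

HB.instance Definition _ := GRing.isNmodMorphism.Build M N g g_nmod.

Lemma loc_scale r m : g (r *: m) = f r *: g m.
Proof. by case: g_loc => _ [gZ _]. Qed.

Lemma loc_frac y : exists ms : M * R, ~ sval p ms.2 /\ f ms.2 *: y = g ms.1.
Proof.
by case: g_loc => _ [_ [g_frac _]]; have [m [s ms]] := g_frac y; exists (m, s).
Qed.

Lemma scalar_loc_ker (Phi : {scalar M}) m : g m = 0 -> f (Phi m) = 0.
Proof.
case: g_loc => _ [_ [_ g_ker]] /g_ker [s [ns sm]]; apply/vanishes_atP.
by exists s; split; rewrite // -linearZ_LR sm linear0.
Qed.

Lemma localize_scalar (Phi : {scalar M}) :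
  exists Psi : {scalar N}, forall m, Psi (g m) = f (Phi m).
Proof.
have [h hE] := functional_choice _ loc_frac.
pose psi y := f (Phi (h y).1) / f (h y).2.
have psiE y m s : ~ sval p s -> f s *: y = g m -> f s * psi y = f (Phi m).
  rewrite /psi; case: (hE y); case: (h y) => m1 s1 /= ns1 e1 ns e.
  have : g (s1 *: m - s *: m1) = 0
    by rewrite raddfB /= !loc_scale -e -e1 !scalerA mulrC subrr.
  move=> /(scalar_loc_ker Phi); rewrite linearB !linearZ_LR rmorphB !rmorphM.
  move/eqP; rewrite subr_eq0 => /eqP E; apply: (mulrI (loc_unit ns1)).
  by rewrite E mulrCA [f s1 * _]mulrC divrK ?loc_unit.
have psi_lin : scalar psi.
  move=> a y z; case: f_loc => _ [_ [_ [_ [f_frac _]]]].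
  have [ra [sa [nsa ea]]] := f_frac a; case: (hE y) => ny ey; case: (hE z) => nz ez.
  set s := sa * (h y).2 * (h z).2.
  have ns : ~ sval p s by do 2 (apply/notin_primeM; split => //).
  have e_ayz : f s *: (a *: y + z) =
      g ((ra * (h z).2) *: (h y).1 + (sa * (h y).2) *: (h z).1).
    rewrite [RHS]raddfD /= !loc_scale -ey -ez scalerDr !scalerA /s !rmorphM /= -ea.
    by congr (_ *: _ + _ *: _); ring.
  apply: (mulrI (loc_unit ns)).
  rewrite (psiE _ _ _ ns e_ayz) linearD !linearZ_LR rmorphD !rmorphM /=.
  by rewrite -(psiE y _ _ ny ey) -(psiE z _ _ nz ez) -ea; ring.
exists (HB.pack_for {scalar N} psi (GRing.isLinear.Build _ _ _ _ _ psi_lin)) => m /=.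
rewrite -[LHS]mul1r -(rmorph1 f) (psiE _ m) //; first exact: notin_prime1.
by rewrite rmorph1 scale1r.
Qed.

Lemma scalar_loc_sum (psi : {scalar N}) k (e : 'I_k -> M) (d : 'I_k -> R) :
  psi (g (\sum_l d l *: e l)) = \sum_l f (d l) * psi (g (e l)).
Proof.
rewrite raddf_sum /= linear_sum.
by apply: eq_bigr => l _; rewrite loc_scale linearZ_LR.
Qed.

Lemma lift_scalar (psi : {scalar N}) : noetherian R -> fin_gen M ->
  exists (Phi : {scalar M}) c, ~ sval p c /\ forall m, f (Phi m) = f c * psi (g m).
Proof.
move=> R_noeth [es es_gen].
have [w [x [nw wx]]] := common_denominator (fun l : 'I_(size es) => psi (g es`_l)).
(* J collects the values at x of the relations among the generators es;
   an element u outside p killing J makes u * x respect every relation. *)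
pose J z := exists d : 'I_(size es) -> R,
  \sum_l d l *: es`_l = 0 /\ z = \sum_l d l * x l.
have J_ideal : is_ideal J.
  split; first by exists (fun=> 0); rewrite !big1 // => l _; rewrite ?scale0r ?mul0r.
  split=> [z z' [d [d0 ->]] [d' [d'0 ->]] | a z [d [d0 ->]]].
    exists (fun l => d l + d' l); split.
      by under eq_bigr do rewrite scalerDl; rewrite big_split /= d0 d'0 addr0.
    by rewrite -big_split; apply: eq_bigr => l _; rewrite mulrDl.
  exists (fun l => a * d l); split.
    by under eq_bigr do rewrite -scalerA; rewrite -scaler_sumr d0 scaler0.
  by rewrite mulr_sumr; apply: eq_bigr => l _; rewrite mulrA.
have J_van z : J z -> vanishes_at p z.
  move=> [d [d0 ->]]; apply/vanishes_atP; rewrite rmorph_sum.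
  under eq_bigr do rewrite rmorphM /= -wx mulrCA.
  by rewrite -mulr_sumr -scalar_loc_sum d0 raddf0 linear0 mulr0.
have [u nu uJ] := vanishing_ideal_annihilator R_noeth J_ideal J_van.
have [|Phi PhiE] := scalar_of_generators (x := fun l => u * x l) es_gen.
  move=> d d0; under eq_bigr do rewrite mulrCA.
  by rewrite -mulr_sumr; apply: uJ; exists d.
exists Phi, (u * w); split; first exact/notin_primeM.
move=> m; have [d ->] := es_gen m; rewrite PhiE scalar_loc_sum rmorph_sum mulr_sumr.
by apply: eq_bigr => l _; rewrite !rmorphM /= -wx; ring.
Qed.

Variable S : M -> Prop.

Lemma free_summand_of_splitting n (m : 'I_n -> M) Phi kap :
  (forall j, gen_submod S (m j)) -> splits_at p m Phi kap ->
  has_free_summand_in (loc_submod p f g S) n.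
Proof.
move=> mS [nkap van].
have [Psi PsiE] := functional_choice _ (fun i => localize_scalar (Phi i)).
apply/has_free_summand_inP; exists (fun j => (f (kap j))^-1 *: g (m j)).
  move=> j; exists (m j), (kap j); split=> //; split=> //.
  by rewrite scalerA divrr ?scale1r ?loc_unit.
exists Psi => i j; rewrite linearZ_LR PsiE.
have /vanishes_atP := van i j; rewrite rmorphB rmorphM rmorph_nat.
by move/eqP; rewrite subr_eq0 => /eqP ->; rewrite mulrCA mulVr ?mulr1 ?loc_unit.
Qed.

Lemma splitting_of_free_summand n : noetherian R -> fin_gen M ->
  has_free_summand_in (loc_submod p f g S) n ->
  exists (m : 'I_n -> M) Phi kap,
    (forall j, gen_submod S (m j)) /\ splits_at p m Phi kap.
Proof.
move=> R_noeth M_fg /has_free_summand_inP [b bS [psi dual]].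
have frac j : exists ms : M * R, gen_submod S ms.1 /\ ~ sval p ms.2 /\ f ms.2 *: b j = g ms.1.
  by have [m [s ms]] := bS j; exists (m, s).
have lift i : exists Pc : {scalar M} * R,
    ~ sval p Pc.2 /\ forall m, f (Pc.1 m) = f Pc.2 * psi i (g m).
  by have [Phi [c Pc]] := lift_scalar (psi i) R_noeth M_fg; exists (Phi, c).
have [[ms msE] [Pc PcE]] := (functional_choice _ frac, functional_choice _ lift).
exists (fun j => (ms j).1), (fun i => (Pc i).1), (fun j => (Pc j).2 * (ms j).2).
split=> [j | ]; first by case: (msE j).
split=> [j | i j].
  by apply/notin_primeM; split; [case: (PcE j) | case: (msE j) => _ []].
apply/vanishes_atP; rewrite rmorphB /= (proj2 (PcE i)) -(proj2 (proj2 (msE j))).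
rewrite linearZ_LR dual !rmorphM rmorph_nat /=.
by case: eqP => [-> | _]; rewrite ?mulr1 ?mul1r ?mulr0 ?mul0r subrr.
Qed.

End Localization.

Lemma free_summand_locus_open (R : comNzRingType) (M : lmodType R) (S : M -> Prop)
    (Rp : spec R -> comUnitRingType) (f : forall p, R -> Rp p)
    (Mp : forall p, lmodType (Rp p)) (g : forall p, M -> Mp p) :
  noetherian R -> fin_gen M ->
  (forall p, ring_localization p (f p)) ->
  (forall p, module_localization p (f p) (g p)) ->
  forall p n, has_free_summand_in (loc_submod p (f p) (g p) S) n ->
  exists2 u, ~ sval p u &
    forall q, ~ sval q u -> has_free_summand_in (loc_submod q (f q) (g q) S) n.
Proof.
move=> R_noeth M_fg f_loc g_loc p n.
case/(splitting_of_free_summand (f_loc p) (g_loc p) R_noeth M_fg) => m [Phi [kap [mS]]].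
case/splits_at_open => u nu split_q; exists u => // q /split_q.
exact: free_summand_of_splitting.
Qed.

Theorem lemma3p5 (R : comNzRingType) (M : lmodType R)
    (X : spec R -> Prop) (S : M -> Prop) (t : nat)
    (Rp : spec R -> comUnitRingType) (f : forall p, R -> Rp p)
    (Mp : forall p, lmodType (Rp p)) (g : forall p, M -> Mp p) :
  noetherian R -> fin_gen M -> basic X ->
  (forall p, ring_localization p (f p)) ->
  (forall p, module_localization p (f p) (g p)) ->
  zariski_closed_in X
    (fun p => X p /\ exists d, is_delta p (f p) (g p) S d /\ (d <= t)%N).
Proof.
move=> R_noeth M_fg _ f_loc g_loc.
pose I x := forall q, ~ sval q x ->
  exists2 n, (t < n)%N & has_free_summand_in (loc_submod q (f q) (g q) S) n.
exists I => p; split=> [[Xp /largest_free_summand_le delta_le] | [Xp pI]]; split=> //.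
  move=> x Ix; apply: NNPP => nx; have [n lt_tn /delta_le] := Ix p nx.
  by rewrite leqNgt lt_tn.
apply/largest_free_summand_le => n free_n; rewrite leqNgt; apply/negP => lt_tn.
have [u nu u_free] := free_summand_locus_open R_noeth M_fg f_loc g_loc free_n.
by apply: nu; apply: pI => q nq; exists n => //; apply: u_free.
Qed.
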